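(* Let $\mathbf{A}$ be a $0$-$1$ matrix of full row rank with $I$ columns and at least one $1$ in every column, let $RM_{\boldsymbol p}(\mathbf{A})=\{\boldsymbol p\in\mathbb R^I_{>0}:\mathbf1'\boldsymbol p=1,\ \log\boldsymbol p=\mathbf A'\boldsymbol\theta\text{ for some }\boldsymbol\theta\}$, let $\mathbf D$ be a $K\times I$ matrix whose rows form a basis of $\mathrm{Ker}(\mathbf A)$, and let $\boldsymbol p_0\in RM_{\boldsymbol p}(\mathbf A)$, $\boldsymbol Y_N\sim\mathrm{Mult}(N,\boldsymbol p_0)$. Suppose the model has the overall effect, i.e. the vector $\mathbf 1$ lies in the row space of $\mathbf A$. Then the covariance matrix of the asymptotic normal distribution (as $N\to\infty$) of $N^{1/2}(\hat{\boldsymbol p}_N-\boldsymbol p_0)$ conditional on existence of the MLE, and of $N^{1/2}(\tilde{\boldsymbol p}_N-\boldsymbol p_0)$, namely $\mathbf M\boldsymbol\Sigma\mathbf M'$ with $\boldsymbol\Sigma=\Delta[\boldsymbol p_0]-\boldsymbol p_0\boldsymbol p_0'$, $\mathbf H=(\mathbf 1,\Delta[\boldsymbol p_0^{-1}]\mathbf D')$, $\mathbf M=\mathbf I-\Delta[\boldsymbol p_0]\mathbf H(\mathbf H'\Delta[\boldsymbol p_0]\mathbf H)^{-1}\mathbf H'$, is equal to $$\boldsymbol\Sigma-\mathbf D'(\mathbf D\Delta[\boldsymbol p_0^{-1}]\mathbf D')^{-1}\mathbf D.$$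
   Context: $\Delta[\boldsymbol v]$ is the diagonal matrix with diagonal $\boldsymbol v$; vector powers and logs are componentwise. $\hat{\boldsymbol p}_N$ is the MLE of $\boldsymbol p_0$ under the model (maximizer of $\boldsymbol Y_N'\log\boldsymbol p$ over the model); $\tilde{\boldsymbol p}_N$ equals $\hat{\boldsymbol p}_N$ when the MLE exists and $(1/I)\mathbf1$ otherwise. *)

From HB Require Import structures.
From mathcomp Require Import all_boot all_order all_algebra.
From mathcomp Require Import reals exp.
Set Implicit Arguments. Unset Strict Implicit. Unset Printing Implicit Defensive.
Import Order.TTheory GRing.Theory Num.Theory.
Local Open Scope ring_scope.

Definition Delta (R : realType) (n : nat) (v : 'cV[R]_n) : 'M[R]_n := diag_mx v^T.

Definition vinv (R : realType) (n : nat) (v : 'cV[R]_n) : 'cV[R]_n := map_mx (fun x => x^-1) v.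
Definition vlog (R : realType) (n : nat) (v : 'cV[R]_n) : 'cV[R]_n := map_mx (@ln R) v.

Definition zero_one_mx (R : realType) (J I : nat) (A : 'M[R]_(J, I)) : Prop :=
  forall i j, A i j = 0 \/ A i j = 1.

Definition every_col_has_one (R : realType) (J I : nat) (A : 'M[R]_(J, I)) : Prop :=
  forall j, exists i, A i j = 1.

Definition RMp (R : realType) (J I : nat) (A : 'M[R]_(J, I)) (p : 'cV[R]_I) : Prop :=
  (forall i, 0 < p i 0) /\ \sum_i p i 0 = 1 /\
  exists theta : 'cV[R]_J, vlog p = A^T *m theta.

(* the rows of D form a basis of Ker(A) = { x : A x = 0 } (row vectors u with u A' = 0) *)
Definition rows_basis_of_ker (R : realType) (J I K : nat)
  (A : 'M[R]_(J, I)) (D : 'M[R]_(K, I)) : Prop :=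
  row_free D /\ (D == kermx A^T)%MS.

Definition overall_effect (R : realType) (J I : nat) (A : 'M[R]_(J, I)) : Prop :=
  ((const_mx 1 : 'rV[R]_I) <= A)%MS.

Definition SigmaM (R : realType) (I : nat) (p : 'cV[R]_I) : 'M[R]_I :=
  Delta p - p *m p^T.
Definition HM (R : realType) (I K : nat) (p : 'cV[R]_I) (D : 'M[R]_(K, I)) : 'M[R]_(I, 1 + K) :=
  row_mx (const_mx 1) (Delta (vinv p) *m D^T).
Definition MM (R : realType) (I K : nat) (p : 'cV[R]_I) (D : 'M[R]_(K, I)) : 'M[R]_I :=
  1%:M - Delta p *m HM p D *m invmx ((HM p D)^T *m Delta p *m HM p D) *m (HM p D)^T.

From HB Require Import structures.
From mathcomp Require Import all_boot all_order all_algebra.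
From mathcomp Require Import reals exp.
Set Implicit Arguments. Unset Strict Implicit. Unset Printing Implicit Defensive.
Import Order.TTheory GRing.Theory Num.Theory.
Local Open Scope ring_scope.

(* Write P = Delta[p0], Q = P^-1 and e = 1, so that P e = p0 and e'p0 = 1.
   The overall effect gives D e = 0, which makes H' P H block diagonal,
   diag(1, D Q D'), and hence M = I - p0 e' - D'(D Q D')^-1 D Q.  A direct
   computation gives M Sigma = Sigma - D'(D Q D')^-1 D =: T, and T H = 0, so
   the right factor M' = I - H (H' P H)^-1 H' P acts trivially on T.  D Q D'
   is invertible because Q is positive diagonal and D has full row rank. *)

Section ProjectionCovariance.
Variables (F : fieldType) (n k : nat).
Variables (P Q : 'M[F]_n) (e p : 'cV[F]_n) (D : 'M[F]_(k, n)).
Hypotheses (PQ : P *m Q = 1%:M) (PT : P^T = P) (Pe : P *m e = p).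
Hypotheses (ep : e^T *m p = 1%:M) (De : D *m e = 0).
Hypothesis G_unit : D *m Q *m D^T \in unitmx.

Local Notation G := (D *m Q *m D^T).
Local Notation H := (row_mx e (Q *m D^T)).
Local Notation M := (1%:M - P *m H *m invmx (H^T *m P *m H) *m H^T).
Local Notation Sigma := (P - p *m p^T).
Local Notation T := (Sigma - D^T *m invmx G *m D).

Let QP : Q *m P = 1%:M. Proof. exact: mulmx1C. Qed.

Let QT : Q^T = Q.
Proof. by rewrite -[LHS]mulmx1 -PQ mulmxA -PT -trmx_mul PQ trmx1 mul1mx. Qed.

Let Qp : Q *m p = e. Proof. by rewrite -Pe mulmxA QP mul1mx. Qed.

Let eP : e^T *m P = p^T. Proof. by rewrite -Pe trmx_mul PT. Qed.

Let pQ : p^T *m Q = e^T. Proof. by rewrite -Qp trmx_mul QT. Qed.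

Let pe : p^T *m e = 1%:M. Proof. by rewrite -(trmxK e) -trmx_mul ep trmx1. Qed.

Let eD : e^T *m D^T = 0. Proof. by rewrite -trmx_mul De trmx0. Qed.

Let tr_H : H^T = col_mx e^T (D *m Q).
Proof. by rewrite tr_row_mx trmx_mul trmxK QT. Qed.

Lemma gram_H : H^T *m P *m H = block_mx (1%:M : 'M_1) 0 0 G.
Proof.
rewrite tr_H mul_col_mx mul_col_row eP pe mulmxA pQ eD -!mulmxA Pe Qp De.
by rewrite (mulmxA P) PQ mul1mx mulmxA.
Qed.

Lemma M_expand : M = 1%:M - (p *m e^T + D^T *m invmx G *m D *m Q).
Proof.
have PH : P *m H = row_mx p D^T by rewrite mul_mx_row Pe mulmxA PQ mul1mx.
rewrite gram_H invmx_block_diag ?block_diag_mx_unit ?unitmx1 // invmx1.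
rewrite PH mul_row_block tr_H mul_row_col !(mulmx0, addr0, add0r) mulmx1.
by rewrite !mulmxA.
Qed.

Lemma M_mul_Sigma : M *m Sigma = T.
Proof.
rewrite M_expand; set Gi := invmx G.
rewrite mulmxBl mul1mx mulmxDl !mulmxBr -!mulmxA eP (mulmxA e^T) ep mul1mx.
rewrite subrr add0r.
by rewrite QP mulmx1 (mulmxA Q) Qp (mulmxA D) De mul0mx !mulmx0 subr0 !mulmxA.
Qed.

Lemma T_mul_H : T *m H = 0.
Proof.
rewrite mul_mx_row -row_mx0; congr row_mx.
  by rewrite !mulmxBl Pe -!mulmxA pe De !mulmx0 mulmx1 subrr subr0.
rewrite !mulmxBl !mulmxA PQ mul1mx -(mulmxA p) pQ -(mulmxA p) eD mulmx0 subr0.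
by rewrite -(mulmxA _ D Q) -(mulmxA _ (D *m Q)) mulmxKV ?subrr.
Qed.

Lemma projection_covariance : M *m Sigma *m M^T = T.
Proof.
rewrite M_mul_Sigma linearB /= trmx1 mulmxBr mulmx1 !trmx_mul trmxK.
by rewrite !mulmxA T_mul_H !mul0mx subr0.
Qed.

End ProjectionCovariance.

Section PositiveDiagonalGram.
Variables (R : realFieldType) (n : nat) (w : 'rV[R]_n).
Hypothesis w_gt0 : forall i, 0 < w 0 i.

Lemma diag_quad_form_eq0 (y : 'rV[R]_n) : y *m diag_mx w *m y^T = 0 -> y = 0.
Proof.
move=> /(congr1 (fun B : 'M_1 => B 0 0)); rewrite !mxE => yy0.
have sq_ge0 i : 0 <= (y *m diag_mx w) 0 i * y^T i 0.
  by rewrite mul_mx_diag !mxE mulrAC -expr2 mulr_ge0 ?sqr_ge0 // ltW.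
apply/rowP => i; apply/eqP; rewrite mxE.
have := psumr_eq0P (fun i _ => sq_ge0 i) yy0 (i := i) isT.
rewrite mul_mx_diag !mxE mulrAC => /eqP.
by rewrite mulf_eq0 (gt_eqF (w_gt0 i)) orbF mulf_eq0 orbb.
Qed.

Lemma unitmx_diag_gram (m : nat) (D : 'M[R]_(m, n)) :
  row_free D -> D *m diag_mx w *m D^T \in unitmx.
Proof.
move=> D_free; rewrite -row_free_unit -kermx_eq0.
set x := kermx _; have xG : x *m (D *m diag_mx w *m D^T) = 0 := mulmx_ker _.
rewrite -(mulmx_free_eq0 _ D_free); apply/eqP/row_matrixP => i.
rewrite row0; apply: diag_quad_form_eq0.
by rewrite row_mul trmx_mul !mulmxA -2!(mulmxA (row i x)) -row_mul xG row0 mul0mx.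
Qed.

End PositiveDiagonalGram.

Lemma tr_const1_mul (R : pzRingType) (n : nat) (v : 'cV[R]_n) :
  (const_mx 1)^T *m v = (\sum_i v i 0)%:M.
Proof.
apply/matrixP => i j; rewrite !ord1 !mxE eqxx mulr1n.
by apply: eq_bigr => k _; rewrite !mxE mul1r.
Qed.

Section DiagonalOfVector.
Variables (R : realType) (n : nat) (p : 'cV[R]_n).

Lemma tr_Delta : (Delta p)^T = Delta p.
Proof. exact: tr_diag_mx. Qed.

Lemma Delta_mul_const1 : Delta p *m const_mx 1 = p.
Proof. by apply/matrixP => i j; rewrite mul_diag_mx !mxE ord1 mulr1. Qed.

Lemma Delta_vinvK : (forall i, p i 0 != 0) -> Delta p *m Delta (vinv p) = 1%:M.
Proof.
move=> p_neq0; rewrite mulmx_diag -diag_const_mx; congr diag_mx.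
by apply/rowP => i; rewrite !mxE mulfV.
Qed.

End DiagonalOfVector.

Lemma ker_basis_mul_const1 (R : realType) (J I K : nat)
    (A : 'M[R]_(J, I)) (D : 'M[R]_(K, I)) :
  rows_basis_of_ker A D -> overall_effect A -> D *m (const_mx 1 : 'cV_I) = 0.
Proof.
move=> [_ /andP[/sub_kermxP DA _]] /submxP[w const1_A].
by rewrite -trmx_const const1_A trmx_mul mulmxA DA mul0mx.
Qed.

Theorem corollary3p9 (R : realType) (J I K : nat)
  (A : 'M[R]_(J, I)) (D : 'M[R]_(K, I)) (p0 : 'cV[R]_I) :
  zero_one_mx A ->
  \rank A = J ->
  every_col_has_one A ->
  rows_basis_of_ker A D ->
  RMp A p0 ->
  overall_effect A ->
  MM p0 D *m SigmaM p0 *m (MM p0 D)^T =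
    SigmaM p0 - D^T *m invmx (D *m Delta (vinv p0) *m D^T) *m D.
Proof.
move=> _ _ _ Dbasis [p0_gt0 [p0_sum _]] A_overall.
have p0_neq0 i : p0 i 0 != 0 by rewrite gt_eqF.
have const1_p0 : (const_mx 1)^T *m p0 = 1%:M by rewrite tr_const1_mul p0_sum.
have gram_unit : D *m Delta (vinv p0) *m D^T \in unitmx.
  by apply: unitmx_diag_gram Dbasis.1 => i; rewrite !mxE invr_gt0.
exact: projection_covariance (Delta_vinvK p0_neq0) (tr_Delta p0)
  (Delta_mul_const1 p0) const1_p0 (ker_basis_mul_const1 Dbasis A_overall)
  gram_unit.
Qed.
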